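(* Let $n\ge27$, $\mathcal{X},\mathcal{Y}$ finite with $|\mathcal{X}|,|\mathcal{Y}|\ge2$, let $M$ be a discrete random variable, $\mathbf{X}$ a random vector on $\mathcal{X}^n$, and $(\mathbf{Y}_w)_{w\in\mathcal{P}(\mathcal{Y}|\mathcal{X})}$ random vectors on $\mathcal{Y}^n$ such that $M,\mathbf{X},(\mathbf{Y}_w)_w$ form a Markov chain in that order and $\mathbf{Y}_w|\mathbf{X}\sim w^n$. Let $\delta,\alpha>0$ and $\epsilon>\frac{2|\mathcal{X}||\mathcal{Y}|}{n}\log_2 n$. If for some $\tilde w\in\mathcal{P}(\mathcal{Y}|\mathcal{X})$ $$\Pr\left(|h(\mathbf{Y}_{\tilde w}|M)-\mathbb{H}(\mathbf{Y}_{\tilde w}|M)|>n\delta\right)<2^{-n\alpha},$$ then $$\Pr\left(|h(\mathbf{Y}_w|M)-\mathbb{H}(\mathbf{Y}_w|M)|>n\tilde\delta\right)<2^{-n\epsilon}+2^{-n(\alpha-\epsilon)},$$ where $$\tilde\delta=(2+2^{-n\epsilon}+2^{-n(\alpha-\epsilon)})(\delta+\epsilon)+(2^{-n\epsilon}+2^{-n(\alpha-\epsilon)})\left[\log_2|\mathcal{Y}|-\frac2n\log_2(2^{-n\epsilon}+2^{-n(\alpha-\epsilon)})\right],$$ for all $w\in\mathcal{P}(\mathcal{Y}|\mathcal{X})$ such that $$\sup_{\hat p\in\mathcal{P}(\mathcal{X}),\ \hat w\in\mathcal{P}(\mathcal{Y}|\mathcal{X})}\mathbb{D}_{\hat w}(w\|\tilde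 w|\hat p)\le\epsilon-\frac{2|\mathcal{X}||\mathcal{Y}|}{n}\log_2 n.$$
   Context: $\mathcal{P}(\mathcal{Y}|\mathcal{X})$ is the set of conditional distributions from $\mathcal{X}$ to $\mathcal{Y}$, $\mathcal{P}(\mathcal{X})$ the set of distributions on $\mathcal{X}$, $w^n(\mathbf{y}|\mathbf{x})=\prod_t w(y_t|x_t)$. $h(\mathbf{Y}_w|M)=-\log_2 p_{\mathbf{Y}_w|M}(\mathbf{Y}_w|M)$ and $\mathbb{H}$ denotes conditional entropy. $\mathbb{D}_{\hat w}(w\|\tilde w|\hat p)=\sum_{y,x}\hat w(y|x)\hat p(x)\log_2\frac{w(y|x)}{\tilde w(y|x)}$. *)

From HB Require Import structures.
From mathcomp Require Import all_boot all_order all_algebra.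
From mathcomp Require Import all_classical all_reals all_analysis.
Set Implicit Arguments. Unset Strict Implicit. Unset Printing Implicit Defensive.
Import Order.TTheory GRing.Theory Num.Theory.
Import numFieldNormedType.Exports.
Local Open Scope ring_scope.

(* base-2 logarithm (mathcomp-analysis [ln] returns 0 on nonpositive inputs;
   it is only ever multiplied by 0 there, giving 0 log 0 = 0) *)
Definition log2 {R : realType} (x : R) : R := ln x / ln 2.

Definition rsum {R : realType} (u : nat -> R) : R := limn (series u).

Definition is_dist {R : realType} {T : finType} (p : T -> R) : Prop :=
  (forall t, 0 <= p t) /\ \sum_(t : T) p t = 1.

(* conditional distributions / channels, P(Y|X); w x y = w(y|x) *)
Definition is_chan {R : realType} {X Y : finType} (w : X -> Y -> R) : Prop :=
  forall x, is_dist (w x).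

Definition wn {R : realType} {X Y : finType} (n : nat) (w : X -> Y -> R)
  (x : {ffun 'I_n -> X}) (y : {ffun 'I_n -> Y}) : R :=
  \prod_(t < n) w (x t) (y t).

(* Joint law of (M, X): M is discrete, its values are coded by nat;
   PMX m x = Pr(M = m, X = x). *)
Definition is_jointMX {R : realType} {X : finType} (n : nat)
  (PMX : nat -> {ffun 'I_n -> X} -> R) : Prop :=
  (forall m x, 0 <= PMX m x) /\
  (series (fun m => \sum_(x : {ffun 'I_n -> X}) PMX m x) @ \oo --> (1 : R))%classic.

Definition pM {R : realType} {X : finType} (n : nat)
  (PMX : nat -> {ffun 'I_n -> X} -> R) (m : nat) : R :=
  \sum_(x : {ffun 'I_n -> X}) PMX m x.

(* Pr(M = m, Y_w = y), for the Markov chain M - X - Y_w with Y_w|X ~ w^n *)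
Definition PMY {R : realType} {X Y : finType} (n : nat)
  (PMX : nat -> {ffun 'I_n -> X} -> R) (w : X -> Y -> R)
  (m : nat) (y : {ffun 'I_n -> Y}) : R :=
  \sum_(x : {ffun 'I_n -> X}) PMX m x * wn w x y.

Definition hinf {R : realType} {X Y : finType} (n : nat)
  (PMX : nat -> {ffun 'I_n -> X} -> R) (w : X -> Y -> R)
  (m : nat) (y : {ffun 'I_n -> Y}) : R :=
  - log2 (PMY PMX w m y / pM PMX m).

Definition Hcond {R : realType} {X Y : finType} (n : nat)
  (PMX : nat -> {ffun 'I_n -> X} -> R) (w : X -> Y -> R) : R :=
  rsum (fun m => \sum_(y : {ffun 'I_n -> Y}) PMY PMX w m y * hinf PMX w m y).

Definition Pdev {R : realType} {X Y : finType} (n : nat)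
  (PMX : nat -> {ffun 'I_n -> X} -> R) (w : X -> Y -> R) (t : R) : R :=
  rsum (fun m => \sum_(y : {ffun 'I_n -> Y})
    (if t < `| hinf PMX w m y - Hcond PMX w | then PMY PMX w m y else 0)).

(* D_{wh}(w || wt | ph) = sum_{y,x} wh(y|x) ph(x) log2 (w(y|x)/wt(y|x)),
   extended-real valued with the usual conventions: terms with zero weight
   vanish; a positive-weight term with w > 0 = wt is +oo (and then D = +oo);
   a positive-weight term with w = 0 is -oo. *)
Definition Dcond {R : realType} {X Y : finType}
  (wh : X -> Y -> R) (w wt : X -> Y -> R) (ph : X -> R) : \bar R :=
  if [exists x, exists y, (0 < wh x y * ph x) && (wt x y == 0) && (0 < w x y)]
  then +oo%E
  else (\sum_(x : X) \sum_(y : Y)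
          (if (wh x y * ph x == 0)%R then 0%E
           else if (w x y == 0)%R then -oo%E
           else ((wh x y * ph x) * log2 (w x y / wt x y))%R%:E))%E.

Definition supD_le {R : realType} {X Y : finType}
  (w wt : X -> Y -> R) (c : R) : Prop :=
  forall (ph : X -> R) (wh : X -> Y -> R), is_dist ph -> is_chan wh ->
    (Dcond wh w wt ph <= c%:E)%E.

(* The divergence bound, tested on point masses, gives the single-letter
   bound w <= 2^eps' wt for some eps' <= eps, hence p_{Y_w|M} <= 2^(n eps) p_{Y_wt|M}.
   Call an outcome bad if h(Y_wt|M) deviates from H(Y_wt|M) by more than
   n delta or if p_{Y_w|M} < 2^(-n eps) p_{Y_wt|M}.  Its w-probability is at
   most 2^(-n eps) + 2^(n eps) 2^(-n alpha) = a, and off it h(Y_w|M) is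
   within n (delta + eps) of H(Y_wt|M).  Splitting both conditional entropies
   along the bad event, and bounding the bad part of H(Y_w|M) by the Gibbs
   inequality, shows that H(Y_w|M) and H(Y_wt|M) are close as well; so
   h(Y_w|M) can deviate from H(Y_w|M) by more than n deltat only on the bad
   event. *)

From mathcomp Require Import all_boot all_order all_algebra.
From mathcomp Require Import all_classical all_reals all_analysis.
From mathcomp Require Import ring lra.
Import Order.TTheory GRing.Theory Num.Theory.
Import numFieldNormedType.Exports.
Set Implicit Arguments. Unset Strict Implicit. Unset Printing Implicit Defensive.
Local Open Scope ring_scope.

Section Logarithms.
Variable R : realType.
Implicit Types x y e : R.

Lemma ln2_gt0 : 0 < ln (2 : R).
Proof. by rewrite ln_gt0 // ltr1n. Qed.

Lemma ln_le_subr1 x : 0 < x -> ln x <= x - 1.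
Proof. by move=> x0; have := @le_ln1Dx R (x - 1); rewrite addrCA subrr addr0; apply; lra. Qed.

Lemma invr_ln2_le2 : (ln (2 : R))^-1 <= 2.
Proof.
have : ln (2^-1 : R) <= 2^-1 - 1 by rewrite ln_le_subr1.
rewrite lnV ?posrE // => ln2_ge.
by rewrite -div1r ler_pdivrMr ?ln2_gt0 //; lra.
Qed.

Lemma powR2D e1 e2 : 2 `^ (e1 + e2) = 2 `^ e1 * 2 `^ e2 :> R.
Proof. by rewrite powRD // pnatr_eq0 implybT. Qed.

Lemma log2M x y : 0 < x -> 0 < y -> log2 (x * y) = log2 x + log2 y.
Proof. by move=> x0 y0; rewrite /log2 lnM ?posrE // mulrDl. Qed.

Lemma log2_div x y : 0 < x -> 0 < y -> log2 (x / y) = log2 x - log2 y.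
Proof. by move=> x0 y0; rewrite /log2 ln_div ?posrE // mulrBl. Qed.

Lemma log2Xn k x : 0 < x -> log2 (x ^+ k) = k%:R * log2 x.
Proof. by move=> x0; rewrite /log2 lnXn // mulr_natl mulrnAl. Qed.

Lemma log2_1 : log2 1 = 0 :> R.
Proof. by rewrite /log2 ln1 mul0r. Qed.

Lemma log2_powR e : log2 (2 `^ e) = e.
Proof. by rewrite /log2 ln_powR mulfK // gt_eqF // ln2_gt0. Qed.

Lemma ler_log2 x y : 0 < x -> 0 < y -> (log2 x <= log2 y) = (x <= y).
Proof. by move=> x0 y0; rewrite /log2 ler_pM2r ?invr_gt0 ?ln2_gt0 // ler_ln ?posrE. Qed.

Lemma log2_le0 x : x <= 1 -> log2 x <= 0.
Proof. by move=> x1; rewrite /log2 mulr_le0_ge0 ?ln_le0 // invr_ge0 ltW // ln2_gt0. Qed.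

Lemma log2_ge1 x : 2 <= x -> 1 <= log2 x.
Proof.
move=> x2; rewrite -[1](log2_powR 1) powRr1 // ler_log2 //.
exact: lt_le_trans x2.
Qed.

Lemma norm_log2B_le x y e : 0 < x ->
  2 `^ (- e) * y <= x -> x <= 2 `^ e * y -> `|log2 y - log2 x| <= e.
Proof.
move=> x0 lo up; have pow_gt0 e' : 0 < 2 `^ e' :> R by rewrite powR_gt0.
have y0 : 0 < y by move: (lt_le_trans x0 up); rewrite pmulr_rgt0.
rewrite -ler_log2 ?mulr_gt0 // log2M // log2_powR in lo.
rewrite -ler_log2 ?mulr_gt0 // log2M // log2_powR in up.
by rewrite ler_norml; apply/andP; split; lra.
Qed.

Lemma mul_ln_div_le x y : 0 <= x -> 0 < y -> x * ln (y / x) <= y - x.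
Proof.
move=> x0 y0; have [->|xn0] := eqVneq x 0; first by rewrite mul0r subr0 ltW.
have xg : 0 < x by rewrite lt_def xn0.
have -> : y - x = x * (y / x - 1) by field.
by rewrite ler_wpM2l // ln_le_subr1 // divr_gt0.
Qed.

End Logarithms.

Section DominatedSeries.
Variables (R : realType) (T : finType) (pm : nat -> R).
Hypotheses (pm_ge0 : forall m, 0 <= pm m) (pm_cvg : cvgn (series pm)).

(* [rsum] is a limit of partial sums and carries no information on divergent
   series; domination by the summable [pm] makes it convergent and linear. *)
Definition dominated (f : nat -> T -> R) :=
  exists C, forall m t, `|f m t| <= C * pm m.

Definition rsum2 (f : nat -> T -> R) := rsum (fun m => \sum_t f m t).

Lemma dominated_cvg f : dominated f -> cvgn (series (fun m => \sum_t f m t)).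
Proof.
case=> C hC; apply: normed_cvg.
have le_sum m : `|\sum_t f m t| <= (#|T|%:R * C) * pm m.
  apply: (le_trans (ler_norm_sum _ _ _)); apply: (le_trans (ler_sum _ (fun t _ => hC m t))).
  by rewrite sumr_const mulr_natl mulrnAl.
apply: (@series_le_cvg _ _ (fun m => (#|T|%:R * C) * pm m)) => [m|m|//|].
- exact: normr_ge0.
- exact: le_trans (le_sum m).
- exact: (@is_cvg_seriesZ _ pm (#|T|%:R * C)).
Qed.

Lemma dominatedD f g : dominated f -> dominated g -> dominated (fun m t => f m t + g m t).
Proof.
case=> C hC [C' hC']; exists (C + C') => m t.
by rewrite mulrDl (le_trans (ler_normD _ _)) // lerD.
Qed.

Lemma dominatedZ c f : dominated f -> dominated (fun m t => c * f m t).
Proof. by case=> C hC; exists (`|c| * C) => m t; rewrite normrM -mulrA ler_wpM2l. Qed.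

Lemma dominated_pm c : dominated (fun m _ => c * pm m).
Proof. by exists `|c| => m t; rewrite normrM [`|pm m|]ger0_norm. Qed.

Lemma dominated_if (b : nat -> T -> bool) f :
  dominated f -> dominated (fun m t => if b m t then f m t else 0).
Proof.
case=> C hC; exists C => m t; case: ifP => _ //.
by rewrite normr0; apply: le_trans (hC m t).
Qed.

Lemma ler_rsum2 f g : dominated f -> dominated g ->
  (forall m t, f m t <= g m t) -> rsum2 f <= rsum2 g.
Proof.
move=> df dg fg; apply: lim_series_le; try exact: dominated_cvg.
by move=> m; apply: ler_sum => t _.
Qed.

Lemma rsum2D f g : dominated f -> dominated g ->
  rsum2 (fun m t => f m t + g m t) = rsum2 f + rsum2 g.
Proof.
move=> df dg; rewrite /rsum2 /rsum -lim_seriesD; try exact: dominated_cvg.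
by congr (limn (series _)); apply/funext => m; rewrite big_split.
Qed.

Lemma rsum2Z c f : dominated f -> rsum2 (fun m t => c * f m t) = c * rsum2 f.
Proof.
move=> df; rewrite /rsum2 /rsum -[c * _]/(c *: _) -lim_seriesZ; last exact: dominated_cvg.
by congr (limn (series _)); apply/funext => m; rewrite -mulr_sumr.
Qed.

Lemma rsum2_pm c f : (forall m, \sum_t f m t = c * pm m) -> rsum2 f = c * rsum pm.
Proof.
move=> hf; rewrite /rsum2 /rsum -[c * _]/(c *: _) -lim_seriesZ //.
by congr (limn (series _)); apply/funext.
Qed.

Lemma rsum2_ge0 f : dominated f -> (forall m t, 0 <= f m t) -> 0 <= rsum2 f.
Proof.
move=> df f0; have <- : rsum2 (fun _ _ => 0) = 0.
  by rewrite (@rsum2_pm 0) ?mul0r // => m; rewrite big1 // mul0r.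
by apply: ler_rsum2 => //; exists 0 => m t; rewrite normr0 mul0r.
Qed.

End DominatedSeries.

Section LetterBound.
Variables (R : realType) (X Y : finType).

Lemma point_mass_dist (T : finType) (t0 : T) : is_dist (fun t => ((t == t0)%:R : R)).
Proof.
split=> [t|]; first exact: ler0n.
by rewrite (bigD1 t0) //= eqxx big1 ?addr0 // => t /negbTE ->.
Qed.

(* Test the divergence bound with ph the point mass at x0 and wh x the point
   mass at y0: the double sum defining Dcond reduces to its (x0, y0) term. *)
Lemma chan_le_of_supD_le (w wt : X -> Y -> R) c :
  is_chan w -> is_chan wt -> supD_le w wt c ->
  forall x y, w x y <= 2 `^ c * wt x y.
Proof.
move=> hw hwt hD x0 y0.
have [w0|wn0] := eqVneq (w x0 y0) 0.
  by rewrite w0 mulr_ge0 ?powR_ge0 //; case: (hwt x0).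
have wg : 0 < w x0 y0 by rewrite lt_def wn0; case: (hw x0) => ->.
pose ph x := ((x == x0)%:R : R); pose wh (x : X) y := ((y == y0)%:R : R).
have := hD ph wh (point_mass_dist x0) (fun=> point_mass_dist y0); rewrite /Dcond.
case: ifPn => [_|no_inf]; first by rewrite leNgt ltey.
rewrite (bigD1 x0) //= [X in (_ + X)%E]big1 ?adde0; last first.
  by move=> x /negbTE hx; apply: big1 => y _; rewrite /ph hx mulr0 eqxx.
rewrite (bigD1 y0) //= [X in (_ + X)%E]big1 ?adde0; last first.
  by move=> y /negbTE hy; rewrite /wh hy mul0r eqxx.
rewrite /wh /ph !eqxx mulr1 oner_eq0 (negbTE wn0) mul1r lee_fin.
have wtg : 0 < wt x0 y0.
  rewrite lt_def; case: (hwt x0) => -> _; rewrite andbT.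
  apply: contra no_inf => /eqP wt0; apply/existsP; exists x0; apply/existsP; exists y0.
  by rewrite /wh /ph !eqxx mulr1 ltr01 wt0 eqxx wg.
move=> le_c; rewrite -ler_pdivrMr // -ler_log2 ?divr_gt0 ?powR_gt0 //.
by rewrite log2_powR.
Qed.

End LetterBound.

Section Channels.
Variables (R : realType) (X Y : finType) (n : nat).
Implicit Types v vt : X -> Y -> R.

Lemma wn_ge0 v (x : {ffun 'I_n -> X}) y : is_chan v -> 0 <= wn v x y.
Proof. by move=> hv; apply: prodr_ge0 => t _; case: (hv (x t)). Qed.

Lemma sum_wn v (x : {ffun 'I_n -> X}) : is_chan v -> \sum_y wn v x y = 1.
Proof.
move=> hv; rewrite /wn -(bigA_distr_bigA (fun t => v (x t))) /=.
by apply: big1 => t _; case: (hv (x t)).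
Qed.

Lemma wn_le_scaled v vt K (x : {ffun 'I_n -> X}) y : is_chan v ->
  (forall a b, v a b <= K * vt a b) -> wn v x y <= K ^+ n * wn vt x y.
Proof.
move=> hv hK; have -> : K ^+ n = \prod_(t < n) K by rewrite prodr_const card_ord.
rewrite /wn -big_split /=; apply: ler_prod => t _.
by rewrite hK andbT; case: (hv (x t)).
Qed.

Variable PMX : nat -> {ffun 'I_n -> X} -> R.
Hypothesis hPMX : is_jointMX PMX.
Hypothesis Y_gt0 : (0 < #|Y|)%N.

Notation pm := (pM PMX).
Notation NN := (#|{ffun 'I_n -> Y}|%:R : R).

Lemma pM_ge0 m : 0 <= pm m.
Proof. by apply: sumr_ge0 => x _; case: hPMX. Qed.

Lemma pM_cvg : cvgn (series pm).
Proof. by case: hPMX => _ /cvgP. Qed.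

Lemma rsum_pM : rsum pm = 1.
Proof. by case: hPMX => _ /cvg_lim; apply. Qed.

Lemma NN_gt0 : 0 < NN.
Proof. by rewrite ltr0n card_ffun card_ord expn_gt0 Y_gt0. Qed.

Lemma log2_NN_ge0 : 0 <= log2 NN.
Proof.
apply: divr_ge0; last exact: ltW (ln2_gt0 R).
by rewrite ln_ge0 // ler1n card_ffun card_ord expn_gt0 Y_gt0.
Qed.

Lemma PMY_ge0 v m y : is_chan v -> 0 <= PMY PMX v m y.
Proof. by move=> hv; apply: sumr_ge0 => x _; rewrite mulr_ge0 ?wn_ge0 //; case: hPMX. Qed.

Lemma sum_PMY v m : is_chan v -> \sum_y PMY PMX v m y = pm m.
Proof.
move=> hv; rewrite /PMY exchange_big /=; apply: eq_bigr => x _.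
by rewrite -mulr_sumr sum_wn // mulr1.
Qed.

Lemma PMY_le_pM v m y : is_chan v -> PMY PMX v m y <= pm m.
Proof.
move=> hv; rewrite -(sum_PMY m hv) (bigD1 y) //= lerDl.
by apply: sumr_ge0 => z _; apply: PMY_ge0.
Qed.

Lemma PMY_le_scaled v vt K m y : is_chan v ->
  (forall a b, v a b <= K * vt a b) -> PMY PMX v m y <= K ^+ n * PMY PMX vt m y.
Proof.
move=> hv hK; rewrite /PMY mulr_sumr; apply: ler_sum => x _.
rewrite mulrCA ler_wpM2l ?wn_le_scaled //; by case: hPMX.
Qed.

Lemma hinfE v m y : is_chan v -> 0 < PMY PMX v m y ->
  hinf PMX v m y = log2 (pm m) - log2 (PMY PMX v m y).
Proof.
move=> hv Pg; have pmg : 0 < pm m by apply: lt_le_trans Pg (PMY_le_pM m y hv).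
by rewrite /hinf log2_div // opprB.
Qed.

Lemma hinf_ge0 v m y : is_chan v -> 0 <= hinf PMX v m y.
Proof.
move=> hv; rewrite /hinf oppr_ge0 log2_le0 //.
have [->|pmn0] := eqVneq (pm m) 0; first by rewrite invr0 mulr0 ler01.
have pmg : 0 < pm m by rewrite lt_def pmn0 pM_ge0.
by rewrite ler_pdivrMr // mul1r PMY_le_pM.
Qed.

(* The Gibbs inequality, term by term, against the reference weight
   lam * pm m / NN spread uniformly over the NN output words. *)
Lemma PMY_hinf_le v lam m y : is_chan v -> 0 < lam ->
  PMY PMX v m y * hinf PMX v m y <=
  PMY PMX v m y * (log2 NN - log2 lam) + (lam * pm m / NN - PMY PMX v m y) / ln 2.
Proof.
move=> hv lam_gt0; set P := PMY PMX v m y; have l2 := ln2_gt0 R.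
have [P0|Pn0] := eqVneq P 0.
  rewrite P0 !mul0r subr0 add0r divr_ge0 ?(ltW l2) ?divr_ge0 ?(ltW NN_gt0) //.
  by rewrite mulr_ge0 ?pM_ge0 ?ltW.
have Pg : 0 < P by rewrite lt_def Pn0 PMY_ge0.
have pmg : 0 < pm m by apply: lt_le_trans Pg (PMY_le_pM m y hv).
have r_gt0 : 0 < lam * pm m / NN by rewrite !mulr_gt0 ?invr_gt0 ?NN_gt0.
have := mul_ln_div_le (ltW Pg) r_gt0.
rewrite !ln_div ?lnM ?posrE ?mulr_gt0 ?invr_gt0 ?NN_gt0 // => gibbs.
rewrite hinfE // /log2 -subr_ge0.
set r := lam * pm m / NN in gibbs *.
have -> : P * (ln NN / ln 2 - ln lam / ln 2) + (r - P) / ln 2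
          - P * (ln (pm m) / ln 2 - ln P / ln 2)
        = ((r - P) - P * (ln lam + ln (pm m) - ln NN - ln P)) / ln 2.
  by field; rewrite gt_eqF.
by apply: divr_ge0 (ltW l2); rewrite subr_ge0.
Qed.

Lemma dominated_PMY v : is_chan v -> dominated pm (PMY PMX v).
Proof.
by move=> hv; exists 1 => m y; rewrite mul1r ger0_norm ?PMY_ge0 ?PMY_le_pM.
Qed.

Lemma pM_div_NN_le m : pm m / NN <= pm m.
Proof.
rewrite ler_pdivrMr ?NN_gt0 // ler_peMr ?pM_ge0 // ler1n.
by rewrite card_ffun card_ord expn_gt0 Y_gt0.
Qed.

Lemma dominated_PMY_hinf v : is_chan v ->
  dominated pm (fun m y => PMY PMX v m y * hinf PMX v m y).
Proof.
move=> hv; exists (log2 NN + (ln 2)^-1) => m y.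
rewrite ger0_norm ?mulr_ge0 ?hinf_ge0 ?PMY_ge0 //.
apply: (le_trans (PMY_hinf_le m y hv ltr01)); rewrite log2_1 subr0 mul1r [X in _ <= X]mulrDl.
have := pM_div_NN_le m; have := PMY_le_pM m y hv; have := PMY_ge0 m y hv.
have := invr_ge0 (ln (2 : R)); rewrite (ltW (ln2_gt0 R)) => l2 P0 P_le pm_le.
apply: lerD; first by rewrite mulrC ler_wpM2l ?log2_NN_ge0.
by rewrite [_ / ln 2]mulrC ler_wpM2l //; lra.
Qed.

Lemma rsum2_PMY v : is_chan v -> rsum2 (PMY PMX v) = 1.
Proof.
move=> hv; rewrite (rsum2_pm pM_cvg (c := 1)) ?mul1r ?rsum_pM // => m.
by rewrite sum_PMY // mul1r.
Qed.

Lemma HcondE v :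
  Hcond PMX v = rsum2 (fun m y => PMY PMX v m y * hinf PMX v m y).
Proof. by []. Qed.

Lemma PdevE v t : Pdev PMX v t =
  rsum2 (fun m y => if t < `|hinf PMX v m y - Hcond PMX v| then PMY PMX v m y else 0).
Proof. by []. Qed.

Lemma Hcond_ge0 v : is_chan v -> 0 <= Hcond PMX v.
Proof.
move=> hv; rewrite HcondE; apply: (rsum2_ge0 pM_cvg (dominated_PMY_hinf hv)) => m y.
by rewrite mulr_ge0 ?PMY_ge0 ?hinf_ge0.
Qed.

Lemma Hcond_le v : is_chan v -> Hcond PMX v <= log2 NN.
Proof.
move=> hv; have l2 := ln2_gt0 R.
pose g m y := log2 NN * PMY PMX v m y + (ln 2)^-1 * (pm m / NN - PMY PMX v m y).
have dg : dominated pm g.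
  apply: dominatedD (dominatedZ _ (dominated_PMY hv)) (dominatedZ _ _).
  exists 1 => m y; have := pM_div_NN_le m; have := PMY_le_pM m y hv.
  have := PMY_ge0 m y hv; have := divr_ge0 (pM_ge0 m) (ltW NN_gt0).
  by rewrite mul1r ler_norml => *; apply/andP; split; lra.
have -> : log2 NN = rsum2 g.
  rewrite (rsum2_pm pM_cvg (c := log2 NN)) ?rsum_pM ?mulr1 // => m.
  have sum_const : \sum_(y : {ffun 'I_n -> Y}) (pm m / NN) = pm m.
    rewrite sumr_const -[#|_|]/#|{ffun 'I_n -> Y}| -[_ *+ #|_|]mulr_natr.
    by rewrite mulfVK // gt_eqF // NN_gt0.
  by rewrite big_split /= -!mulr_sumr sumrB sum_const sum_PMY // subrr mulr0 addr0.
rewrite HcondE; apply: (ler_rsum2 pM_cvg (dominated_PMY_hinf hv) dg) => m y.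
have := PMY_hinf_le m y hv ltr01; rewrite log2_1 subr0 mul1r => le_g.
by rewrite /g [log2 _ * _]mulrC [(ln 2)^-1 * _]mulrC.
Qed.

Lemma Pdev_le1 v t : is_chan v -> Pdev PMX v t <= 1.
Proof.
move=> hv; rewrite PdevE -(rsum2_PMY hv).
apply: (ler_rsum2 pM_cvg (dominated_if _ (dominated_PMY hv)) (dominated_PMY hv)) => m y.
by case: ifP => _ //; apply: PMY_ge0.
Qed.

End Channels.

Section Comparison.
Variables (R : realType) (X Y : finType) (n : nat).
Variable PMX : nat -> {ffun 'I_n -> X} -> R.
Hypotheses (hPMX : is_jointMX PMX) (Y_gt0 : (0 < #|Y|)%N).
Variables (w wt : X -> Y -> R) (delta eps alpha : R).
Hypotheses (hw : is_chan w) (hwt : is_chan wt).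
Hypothesis PMY_le_pow_eps :
  forall m y, PMY PMX w m y <= 2 `^ (n%:R * eps) * PMY PMX wt m y.
Hypothesis invr_ln2_le_D : (ln 2)^-1 <= n%:R * (delta + eps).
Hypothesis Pdev_wt_lt : Pdev PMX wt (n%:R * delta) < 2 `^ (- (n%:R * alpha)).

Local Notation nr := (n%:R : R).
Local Notation pm := (pM PMX).
Local Notation P := (PMY PMX w).
Local Notation Q := (PMY PMX wt).
Local Notation h_w := (hinf PMX w).
Local Notation h_wt := (hinf PMX wt).
Local Notation H_w := (Hcond PMX w).
Local Notation H_wt := (Hcond PMX wt).
Local Notation NN := (#|{ffun 'I_n -> Y}|%:R : R).
Local Notation D := (nr * (delta + eps)).
Local Notation a := (2 `^ (- (nr * eps)) + 2 `^ (- (nr * (alpha - eps)))).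

Definition bad m y :=
  (nr * delta < `|h_wt m y - H_wt|) || (P m y < 2 `^ (- (nr * eps)) * Q m y).

Definition Pbad m y := if bad m y then P m y else 0.

Lemma a_gt0 : 0 < a.
Proof. by rewrite addr_gt0 ?powR_gt0. Qed.

Lemma D_ge0 : 0 <= D.
Proof. by apply: le_trans invr_ln2_le_D; rewrite invr_ge0 ltW ?ln2_gt0. Qed.

Lemma dominated_Pbad : dominated pm Pbad.
Proof. exact: dominated_if (dominated_PMY hPMX hw). Qed.

Lemma hinf_w_near_Hwt m y : 0 < P m y -> ~~ bad m y -> `|h_w m y - H_wt| <= D.
Proof.
move=> Pg; rewrite negb_or -!leNgt => /andP[dev_le lo].
have up := PMY_le_pow_eps m y.
have Qg : 0 < Q m y by move: (lt_le_trans Pg up); rewrite pmulr_rgt0 // powR_gt0.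
have near_hwt : `|h_w m y - h_wt m y| <= nr * eps.
  rewrite (hinfE hPMX hw Pg) (hinfE hPMX hwt Qg) opprB addrC addrA subrK.
  exact: norm_log2B_le.
have -> : h_w m y - H_wt = (h_w m y - h_wt m y) + (h_wt m y - H_wt).
  by rewrite addrA subrK.
by rewrite mulrDr addrC (le_trans (ler_normD _ _)) // lerD.
Qed.

(* On the bad event either P <= 2^(n eps) Q with h_wt far from H_wt, or
   P < 2^(-n eps) Q. *)
Lemma rsum2_Pbad_lt : rsum2 Pbad < a.
Proof.
pose Qdev m y := if nr * delta < `|h_wt m y - H_wt| then Q m y else 0.
have dQ := dominated_PMY hPMX hwt; have dQdev : dominated pm Qdev := dominated_if _ dQ.
have le_Pbad : rsum2 Pbad <=
    rsum2 (fun m y => 2 `^ (- (nr * eps)) * Q m y + 2 `^ (nr * eps) * Qdev m y).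
  apply: (ler_rsum2 (pM_cvg hPMX) dominated_Pbad).
    exact: dominatedD (dominatedZ _ dQ) (dominatedZ _ dQdev).
  move=> m y; have P_le := PMY_le_pow_eps m y.
  have sQ_ge0 : 0 <= 2 `^ (- (nr * eps)) * Q m y by rewrite mulr_ge0 ?powR_ge0 ?PMY_ge0.
  rewrite /Pbad /bad /Qdev; case: (nr * delta < _) => /=; first lra.
  by rewrite mulr0 addr0; case: ifP => [/ltW|].
apply: (le_lt_trans le_Pbad).
rewrite (rsum2D (pM_cvg hPMX) (dominatedZ _ dQ) (dominatedZ _ dQdev)).
rewrite !(rsum2Z (pM_cvg hPMX)) // (rsum2_PMY hPMX hwt) mulr1 ltrD2l.
have -> : 2 `^ (- (nr * (alpha - eps))) = 2 `^ (nr * eps) * 2 `^ (- (nr * alpha)).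
  by rewrite -powR2D; congr (_ `^ _); ring.
by rewrite ltr_pM2l ?powR_gt0.
Qed.

Lemma PMY_hinf_w_le m y : P m y * h_w m y <=
  (H_wt + D) * P m y + (a / NN / ln 2) * pm m + (log2 NN - log2 a) * Pbad m y.
Proof.
have c_ge0 : 0 <= a / NN / ln 2 * pm m.
  by rewrite !mulr_ge0 ?invr_ge0 ?pM_ge0 ?(ltW a_gt0) ?(ltW (NN_gt0 _ _ Y_gt0)) ?(ltW (ln2_gt0 R)).
have [P0|Pn0] := eqVneq (P m y) 0.
  by rewrite /Pbad P0 if_same mul0r !mulr0 add0r addr0.
have Pg : 0 < P m y by rewrite lt_def Pn0 PMY_ge0.
have HD_ge0 : 0 <= H_wt + D by rewrite addr_ge0 ?D_ge0 ?(Hcond_ge0 hPMX Y_gt0).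
rewrite /Pbad; case: ifP => b.
  have := PMY_hinf_le hPMX Y_gt0 m y hw a_gt0.
  have -> : (a * pm m / NN - P m y) / ln 2 = a / NN / ln 2 * pm m - P m y / ln 2 by ring.
  have : 0 <= P m y / ln 2 by rewrite divr_ge0 ?(ltW Pg) ?(ltW (ln2_gt0 R)).
  have : 0 <= (H_wt + D) * P m y by rewrite mulr_ge0 ?(ltW Pg).
  lra.
have := hinf_w_near_Hwt Pg (negbT b); rewrite ler_norml => /andP[_ near].
have : P m y * h_w m y <= P m y * (H_wt + D) by rewrite ler_wpM2l ?(ltW Pg) //; lra.
lra.
Qed.

Lemma Hwt_PMY_le m y : H_wt * P m y <= P m y * h_w m y + D * P m y + log2 NN * Pbad m y.
Proof.
have [P0|Pn0] := eqVneq (P m y) 0.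
  by rewrite /Pbad P0 if_same mul0r !mulr0 addr0.
have Pg : 0 < P m y by rewrite lt_def Pn0 PMY_ge0.
have Ph_ge0 : 0 <= P m y * h_w m y by rewrite mulr_ge0 ?(ltW Pg) ?(hinf_ge0 hPMX).
have DP_ge0 : 0 <= D * P m y by rewrite mulr_ge0 ?(ltW Pg) ?D_ge0.
rewrite /Pbad; case: ifP => b.
  have : H_wt * P m y <= log2 NN * P m y.
    by rewrite ler_wpM2r ?(ltW Pg) ?(Hcond_le hPMX Y_gt0).
  lra.
have := hinf_w_near_Hwt Pg (negbT b); rewrite ler_norml => /andP[near _].
rewrite mulr0 addr0 (mulrC (P m y)) -mulrDl ler_wpM2r ?(ltW Pg) //; lra.
Qed.

Lemma Hw_le : H_w <= H_wt + D + a / ln 2 + (log2 NN - log2 a) * rsum2 Pbad.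
Proof.
pose g m y := (H_wt + D) * P m y + (a / NN / ln 2) * pm m.
have dg : dominated pm g.
  exact: dominatedD (dominatedZ _ (dominated_PMY hPMX hw)) (dominated_pm _ (pM_ge0 hPMX) _).
have sum_g : rsum2 g = H_wt + D + a / ln 2.
  rewrite (rsum2_pm (pM_cvg hPMX) (c := H_wt + D + a / ln 2)) ?(rsum_pM hPMX) ?mulr1 // => m.
  rewrite big_split /= -mulr_sumr (sum_PMY PMX m hw) sumr_const.
  rewrite -[#|_|]/#|{ffun 'I_n -> Y}| -[_ *+ #|_|]mulr_natr.
  by field; rewrite !gt_eqF ?(NN_gt0 _ _ Y_gt0) ?ln2_gt0.
rewrite HcondE; apply: (le_trans (ler_rsum2 (pM_cvg hPMX) (dominated_PMY_hinf hPMX Y_gt0 hw)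
  (dominatedD dg (dominatedZ _ dominated_Pbad)) PMY_hinf_w_le)).
rewrite (rsum2D (pM_cvg hPMX) dg (dominatedZ _ dominated_Pbad)).
by rewrite (rsum2Z (pM_cvg hPMX) _ dominated_Pbad) sum_g.
Qed.

Lemma Hwt_le : H_wt <= H_w + D + log2 NN * rsum2 Pbad.
Proof.
have dP := dominated_PMY hPMX hw; have dPh := dominated_PMY_hinf hPMX Y_gt0 hw.
have dbad := dominatedZ (log2 NN) dominated_Pbad.
rewrite {1}(_ : H_wt = rsum2 (fun m y => H_wt * P m y)); last first.
  by rewrite (rsum2Z (pM_cvg hPMX)) // (rsum2_PMY hPMX hw) mulr1.
apply: (le_trans (ler_rsum2 (pM_cvg hPMX) (dominatedZ _ dP)
  (dominatedD (dominatedD dPh (dominatedZ _ dP)) dbad) Hwt_PMY_le)).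
rewrite (rsum2D (pM_cvg hPMX) (dominatedD dPh (dominatedZ _ dP)) dbad).
rewrite (rsum2D (pM_cvg hPMX) dPh (dominatedZ _ dP)) (rsum2Z (pM_cvg hPMX) _ dP).
by rewrite (rsum2Z (pM_cvg hPMX) _ dominated_Pbad) (rsum2_PMY hPMX hw) mulr1 -HcondE.
Qed.

Lemma Pdev_w_lt : a <= 1 -> Pdev PMX w ((2 + a) * D + a * (log2 NN - 2 * log2 a)) < a.
Proof.
move=> a_le1; set T := (2 + a) * D + _.
have bad_lt := rsum2_Pbad_lt; have a_log_le0 : a * log2 a <= 0.
  by rewrite mulr_ge0_le0 ?log2_le0 ?(ltW a_gt0).
have LN_ge0 := log2_NN_ge0 R n Y_gt0.
have H_close : `|H_wt - H_w| <= T - D.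
  have := Hw_le; have := Hwt_le.
  have : (log2 NN - log2 a) * rsum2 Pbad <= (log2 NN - log2 a) * a.
    by rewrite ler_wpM2l ?(ltW bad_lt) // subr_ge0 (le_trans (log2_le0 a_le1)).
  have : log2 NN * rsum2 Pbad <= log2 NN * a by rewrite ler_wpM2l ?(ltW bad_lt).
  have : a / ln 2 <= a * D by rewrite ler_wpM2l ?(ltW a_gt0).
  have : 0 <= a * D by rewrite mulr_ge0 ?D_ge0 ?(ltW a_gt0).
  by move=> *; rewrite /T ler_norml; apply/andP; split; lra.
apply: le_lt_trans bad_lt; rewrite PdevE.
apply: (ler_rsum2 (pM_cvg hPMX) (dominated_if _ (dominated_PMY hPMX hw)) dominated_Pbad) => m y.
rewrite /Pbad; case b : (bad m y); first by case: ifP => // _; apply: PMY_ge0.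
have [->|Pn0] := eqVneq (P m y) 0; first by rewrite if_same.
have Pg : 0 < P m y by rewrite lt_def Pn0 PMY_ge0.
have near := hinf_w_near_Hwt Pg (negbT b).
have : `|h_w m y - H_w| <= T.
  have -> : h_w m y - H_w = (h_w m y - H_wt) + (H_wt - H_w) by rewrite addrA subrK.
  by apply: le_trans (ler_normD _ _) _; lra.
by rewrite leNgt => /negbTE ->.
Qed.

End Comparison.

Theorem lemma32 (R : realType) (X Y : finType) (n : nat)
  (PMX : nat -> {ffun 'I_n -> X} -> R) (delta alpha eps : R) :
  (27 <= n)%N -> (2 <= #|X|)%N -> (2 <= #|Y|)%N ->
  is_jointMX PMX ->
  0 < delta -> 0 < alpha ->
  2 * #|X|%:R * #|Y|%:R / n%:R * log2 (n%:R : R) < eps ->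
  forall wt : X -> Y -> R, is_chan wt ->
  Pdev PMX wt (n%:R * delta) < 2 `^ (- (n%:R * alpha)) ->
  forall w : X -> Y -> R, is_chan w ->
  supD_le w wt (eps - 2 * #|X|%:R * #|Y|%:R / n%:R * log2 (n%:R : R)) ->
  let a := 2 `^ (- (n%:R * eps)) + 2 `^ (- (n%:R * (alpha - eps))) in
  let deltat := (2 + a) * (delta + eps)
                + a * (log2 (#|Y|%:R : R) - 2 / n%:R * log2 a) in
  Pdev PMX w (n%:R * deltat) < a.
Proof.
move=> n27 X2 Y2 hPMX delta_gt0 alpha_gt0 c_lt_eps wt hwt hdev w hw hsup; cbv zeta.
set a := 2 `^ _ + _; set deltat := (2 + a) * _ + _.
set c := 2 * #|X|%:R * #|Y|%:R / n%:R * log2 (n%:R : R) in c_lt_eps hsup.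
have n_gt0 : (0 : R) < n%:R by rewrite ltr0n (leq_trans _ n27).
have Y_gt0 : (0 < #|Y|)%N by apply: leq_trans Y2.
have nc_ge2 : 2 <= n%:R * c.
  have XY : 1 <= #|X|%:R * #|Y|%:R :> R.
    by rewrite -natrM ler1n muln_gt0 (leq_trans _ X2) ?(leq_trans _ Y2).
  have log_n : 1 <= log2 (n%:R : R) by rewrite log2_ge1 // ler_nat (leq_trans _ n27).
  have -> : n%:R * c = 2 * (#|X|%:R * #|Y|%:R * log2 (n%:R : R)).
    by rewrite /c; field; rewrite gt_eqF.
  by have := mulr_ege1 XY log_n; lra.
have c_ge0 : 0 <= c by rewrite -(pmulr_rge0 _ n_gt0); lra.
have P_le m y : PMY PMX w m y <= 2 `^ (n%:R * eps) * PMY PMX wt m y.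
  apply: (le_trans (PMY_le_scaled hPMX m y hw (chan_le_of_supD_le hw hwt hsup))).
  rewrite -powR_mulrn ?powR_ge0 // -powRrM [_ * n%:R]mulrC ler_wpM2r ?PMY_ge0 //.
  by apply: ler_powR; rewrite ?ler1n // ler_wpM2l ?ler0n //; lra.
have D_ge : (ln 2)^-1 <= n%:R * (delta + eps).
  apply: (le_trans (invr_ln2_le2 R)); apply: (le_trans nc_ge2).
  by rewrite ler_wpM2l ?ler0n //; lra.
have [a_gt1|a_le1] := ltrP 1 a; first exact: le_lt_trans (Pdev_le1 _ _ hw) a_gt1.
have -> : n%:R * deltat = (2 + a) * (n%:R * (delta + eps))
                          + a * (log2 (#|{ffun 'I_n -> Y}|%:R : R) - 2 * log2 a).
  by rewrite card_ffun card_ord natrX log2Xn ?ltr0n // /deltat; field; rewrite gt_eqF.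
exact: Pdev_w_lt.
Qed.
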